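(* Let $G=G_1\,\square\,\cdots\,\square\, G_d$, where each $G_j$ is a connected $k_j$-regular graph and $k=k_1+\cdots+k_d$ is odd. If the set of Laplacian eigenvalues of $G_j$ consists of even integers for each $j\in\{1,\ldots,d\}$, then for every vertex $u$ of $G$, $\uparrow^{2}G$ has Laplacian perfect state transfer between $(0,u)$ and $(1,u)$ at time $\frac{\pi}{2}$.
   Context: All graphs are simple, undirected, unweighted and connected. The Cartesian product $G\,\square\, H$ of graphs on $m$ and $n$ vertices is the graph with Laplacian matrix $L(G)\otimes I_n+I_m\otimes L(H)$, where $L=D-A$ is the Laplacian. The blow-up $\uparrow^{2}G$ has vertex set $\mathbb{Z}_2\times V(G)$, with $(l,u)\sim(m,v)$ iff $u\sim v$ in $G$. For a graph $X$ with Laplacian $L$, $U(t)=\exp(itL)$, and $X$ has Laplacian perfect state transfer between vertices $a,b$ at time $\tau$ if $U(\tau)\mathbf{e}_a=\gamma\mathbf{e}_b$ for some $\gamma\in\mathbb{C}$. *)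

From HB Require Import structures.
From mathcomp Require Import all_boot all_order all_algebra.
From mathcomp Require Import all_classical all_reals all_analysis.
From mathcomp Require Import complex.
Set Implicit Arguments. Unset Strict Implicit. Unset Printing Implicit Defensive.
Import Order.TTheory GRing.Theory Num.Theory.
Import numFieldNormedType.Exports.
Local Open Scope ring_scope.

Record graph := Graph { gV : finType; gadj : rel gV }.

Definition simple_graph (G : graph) : Prop :=
  symmetric (@gadj G) /\ irreflexive (@gadj G).

Definition connected_graph (G : graph) : Prop :=
  forall x y : gV G, connect (@gadj G) x y.

Definition degree (G : graph) (v : gV G) : nat := #|[pred w | gadj v w]|.

Definition regular_graph (G : graph) (k : nat) : Prop :=
  forall v : gV G, degree v = k.

Definition cart_prod (d : nat) (Gs : 'I_d -> graph) : graph :=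
  @Graph {dffun forall j : 'I_d, gV (Gs j)}
    (fun x y => [exists j : 'I_d, gadj (x j) (y j) &&
                   [forall i : 'I_d, (i != j) ==> (x i == y i :> gV (Gs i))]]).

Definition blowup2 (G : graph) : graph :=
  @Graph ('I_2 * gV G)%type (fun p q => gadj p.2 q.2).

Definition laplacian (F : fieldType) (G : graph) : 'M[F]_#|gV G| :=
  \matrix_(i, j) ((if i == j then (degree (enum_val i))%:R else 0)
                  - (gadj (enum_val i) (enum_val j))%:R).

Section Quantum.
Variable R : realType.
Local Notation C := R[i].
Local Open Scope complex_scope.
Local Open Scope classical_set_scope.

Definition expitL_partial (n : nat) (L : 'M[C]_n) (t : R) (N : nat) : 'M[C]_n :=
  \sum_(m < N) ((t%:C * 'i) ^+ m / (m`!)%:R) *: L ^+ m.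

Definition mx_cvg_to (n : nat) (S : nat -> 'M[C]_n) (M : 'M[C]_n) : Prop :=
  forall i j : 'I_n,
    ((fun N => @complex.Re R (S N i j)) @ \oo --> @complex.Re R (M i j)) /\
    ((fun N => @complex.Im R (S N i j)) @ \oo --> @complex.Im R (M i j)).

Definition is_expitL (n : nat) (L : 'M[C]_n) (t : R) (U : 'M[C]_n) : Prop :=
  mx_cvg_to (expitL_partial L t) U.

Definition lap_PST (X : graph) (a b : gV X) (tau : R) : Prop :=
  exists U : 'M[C]_#|gV X|,
    is_expitL (laplacian C X) tau U /\
    exists gamma : C, forall c : 'I_#|gV X|,
      U c (enum_rank a) = gamma * (c == enum_rank b)%:R.

End Quantum.

From HB Require Import structures.
From mathcomp Require Import all_boot all_order all_algebra.
From mathcomp Require Import all_classical all_reals all_analysis.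
From mathcomp Require Import complex ring.
Import Order.TTheory GRing.Theory Num.Theory.
Import numFieldNormedType.Exports.

Set Implicit Arguments.
Unset Strict Implicit.
Unset Printing Implicit Defensive.
Local Open Scope ring_scope.

(* On the blow-up write lift g (l, y) := g y and antilift g (l, y) := (-1)^l g y.
   Lifting doubles Laplacian eigenvalues, and the neighbour terms of an antilift
   cancel, so antilift δ_u is an eigenfunction with eigenvalue 2 deg u.  Hence
   e_(l,u) = 1/2 lift δ_u + 1/2 (-1)^l antilift δ_u, where δ_u on the product is
   itself a sum of products of eigenfunctions of the factors, whose eigenvalues
   add up.  With even factor eigenvalues and odd deg u = k, at time π/2 the lifted
   part acquires the phase e^(iπ·even) = 1 and the antilifted part e^(iπk) = -1,
   which turns e_(0,u) into e_(1,u).  The exponential series is handled column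
   by column: on an eigenvector of eigenvalue λ its partial sums are the scalar
   partial sums of e^(itλ). *)

Section ComplexSeries.
Variable R : realType.
Local Notation C := R[i].
Local Open Scope complex_scope.
Local Open Scope classical_set_scope.

Definition cis (th : R) : C := cos th +i* sin th.

Definition cvgC (u : nat -> C) (l : C) : Prop :=
  (fun N => complex.Re (u N)) @ \oo --> complex.Re l /\
  (fun N => complex.Im (u N)) @ \oo --> complex.Im l.

Definition limC (u : nat -> C) : C :=
  lim ((fun N => complex.Re (u N)) @ \oo) +i* lim ((fun N => complex.Im (u N)) @ \oo).

Lemma cvgC_limC (u : nat -> C) (l : C) : cvgC u l -> limC u = l.
Proof.
by case: l => a b [ure uim]; rewrite /limC (cvg_lim _ ure) ?(cvg_lim _ uim).
Qed.

Lemma cvgC_sum (I : Type) (r : seq I) (u : I -> nat -> C) (l : I -> C) :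
  (forall i, cvgC (u i) (l i)) ->
  cvgC (fun N => \sum_(i <- r) u i N) (\sum_(i <- r) l i).
Proof.
move=> ul; elim: r => [|i r [IHre IHim]].
  by rewrite big_nil; under eq_fun do rewrite big_nil; split; exact: cvg_cst.
have ReD (x y : C) : complex.Re (x + y) = complex.Re x + complex.Re y.
  by case: x; case: y.
have ImD (x y : C) : complex.Im (x + y) = complex.Im x + complex.Im y.
  by case: x; case: y.
rewrite big_cons; under eq_fun do rewrite big_cons.
have [ure uim] := ul i.
by split; [rewrite ReD; under eq_fun do rewrite ReD | rewrite ImD;
  under eq_fun do rewrite ImD]; exact: cvgD.
Qed.

Lemma cvgC_mulr (u : nat -> C) (l c : C) :
  cvgC u l -> cvgC (fun N => u N * c) (l * c).
Proof.
have ReM (x : C) : complex.Re (x * c) =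
    complex.Re x * complex.Re c - complex.Im x * complex.Im c.
  by case: x; case: c.
have ImM (x : C) : complex.Im (x * c) =
    complex.Re x * complex.Im c + complex.Im x * complex.Re c.
  by clear ReM; case: x; case: c.
move=> [ure uim]; split.
- rewrite ReM; under eq_fun do rewrite ReM.
  by apply: cvgB; apply: cvgM => //; exact: cvg_cst.
- rewrite ImM; under eq_fun do rewrite ImM.
  by apply: cvgD; apply: cvgM => //; exact: cvg_cst.
Qed.

Lemma expr_i (m : nat) : 'i ^+ m =
  ((~~ odd m)%:R * (-1) ^+ m./2) +i* ((odd m)%:R * (-1) ^+ m.-1./2) :> C.
Proof.
have sqr_iE k : 'i ^+ k.*2 = ((-1) ^+ k)%:C :> C.
  by rewrite -muln2 mulnC exprM sqr_i rmorphXn /= rmorphN1.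
rewrite -(odd_double_half m); move: (m./2) => k; case: (odd m).
- rewrite /= odd_double /= exprS sqr_iE uphalf_double add0n half_double.
  by apply/eqP; rewrite eq_complex /= !mul0r !mul1r subr0 add0r !eqxx.
- by rewrite /= odd_double /= half_double sqr_iE mul1r mul0r.
Qed.

Lemma exp_series_termE (th : R) (m : nat) :
  (th%:C * 'i) ^+ m / (m`!)%:R = cos_coeff th m +i* sin_coeff th m.
Proof.
rewrite /cos_coeff /sin_coeff exprMn expr_i -rmorphXn.
rewrite -(rmorph_nat (real_complex R)) -fmorphV; apply/eqP.
rewrite eq_complex /= !(mul0r, mulr0, subr0, addr0, add0r) -exprnP.
by apply/andP; split; apply/eqP; ring.
Qed.

Lemma cis_series (th : R) :
  cvgC (fun N => \sum_(m < N) (th%:C * 'i) ^+ m / (m`!)%:R) (cis th).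
Proof.
have sumE N : \sum_(m < N) (th%:C * 'i) ^+ m / (m`!)%:R =
    series (cos_coeff th) N +i* series (sin_coeff th) N.
  rewrite /series /= !big_mkord.
  elim: N => [|N IHN]; first by rewrite !big_ord0.
  by rewrite !big_ord_recr /= IHN exp_series_termE.
split; under eq_fun do rewrite sumE /=; rewrite /= unlock.
- exact: is_cvg_series_cos_coeff.
- exact: is_cvg_series_sin_coeff.
Qed.

Lemma cis_pimulrn (n : nat) : cis (pi *+ n) = (-1) ^+ n.
Proof.
rewrite /cis -[pi *+ n]add0r.
rewrite (alternatingn (@cosDpi R)) (alternatingn (@sinDpi R)).
by rewrite cos0 sin0 mulr0 mulr1 complexr0 rmorphXn /= rmorphN1.
Qed.

Lemma cis_pimul2z (m : int) : cis (pi * (2 * m)%:~R) = 1.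
Proof.
wlog m_ge0 : m / 0 <= m.
  move=> base; have [/base //|m_lt0] := leP 0 m.
  rewrite -(opprK m) mulrN rmorphN mulrN /cis cosN sinN.
  move: (base (- m)); rewrite oppr_ge0 ltW // => /(_ isT) -[-> ->].
  by rewrite oppr0.
by rewrite -(gez0_abs m_ge0) -PoszM mulr_natr cis_pimulrn -signr_odd oddM.
Qed.

End ComplexSeries.

Section MatrixExponential.
Variable R : realType.
Local Notation C := R[i].
Local Open Scope complex_scope.

Lemma expitL_partial_eigen n (L : 'M[C]_n) (t : R) (v : 'cV[C]_n) (nu : R) N :
  L *m v = nu%:C *: v ->
  expitL_partial L t N *m v =
    (\sum_(m < N) ((t * nu)%:C * 'i) ^+ m / (m`!)%:R) *: v.
Proof.
move=> Lv; have Lmv m : L ^+ m *m v = nu%:C ^+ m *: v.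
  elim: m => [|m IHm]; first by rewrite expr0 scale1r mul1mx.
  by rewrite exprS -[L * _]/(L *m _) -mulmxA IHm -scalemxAr Lv scalerA exprSr.
rewrite /expitL_partial mulmx_suml scaler_suml; apply: eq_bigr => m _.
rewrite -scalemxAl Lmv scalerA rmorphM /=; congr (_ *: _).
by rewrite mulrAC -exprMn mulrAC.
Qed.

Lemma expitL_partial_col_cvg n (L : 'M[C]_n) (t : R) (I : finType)
    (nu : I -> R) (v : I -> 'cV[C]_n) (x : 'I_n) :
  (forall p, L *m v p = (nu p)%:C *: v p) -> delta_mx x 0 = \sum_p v p ->
  forall y, cvgC (fun N => expitL_partial L t N y x)
                 (\sum_p cis (t * nu p) * v p y 0).
Proof.
move=> Lv xE y.
have partialE N : expitL_partial L t N y x =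
    \sum_p (\sum_(m < N) ((t * nu p)%:C * 'i) ^+ m / (m`!)%:R) * v p y 0.
  have -> : expitL_partial L t N y x =
            (expitL_partial L t N *m delta_mx x (0 : 'I_1)) y 0.
    by rewrite -colE mxE.
  rewrite xE mulmx_sumr summxE; apply: eq_bigr => p _.
  by rewrite (expitL_partial_eigen _ _ (Lv p)) mxE.
under eq_fun do rewrite partialE.
by apply: cvgC_sum => p; apply: cvgC_mulr; exact: cis_series.
Qed.

End MatrixExponential.

Section GraphFunctions.
Variable R : realType.
Local Notation C := R[i].
Local Open Scope complex_scope.

Definition lap_fun (X : graph) (f : gV X -> C) (x : gV X) : C :=
  (degree x)%:R * f x - \sum_(y | gadj x y) f y.

Definition delta_fun (X : graph) (x y : gV X) : C := (y == x)%:R.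

Definition gvec (X : graph) (f : gV X -> C) : 'cV[C]_#|gV X| :=
  \col_i f (enum_val i).

Definition lap_eigendecomp (X : graph) (I : finType) (lam : I -> R)
    (W : I -> gV X -> C) (f : gV X -> C) : Prop :=
  (forall p x, lap_fun (W p) x = (lam p)%:C * W p x) /\
  (forall x, \sum_p W p x = f x).

Lemma lap_funZ (X : graph) (c : C) (f : gV X -> C) (x : gV X) :
  lap_fun (fun y => c * f y) x = c * lap_fun f x.
Proof. by rewrite /lap_fun -mulr_sumr mulrBr mulrCA. Qed.

Lemma mul_laplacian_gvec (X : graph) (f : gV X -> C) :
  laplacian C X *m gvec f = gvec (lap_fun f).
Proof.
apply/matrixP => i j; rewrite !mxE.
under eq_bigr do rewrite !mxE mulrBl.
rewrite sumrB (bigD1 i) //= eqxx big1 ?addr0; last first.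
  by move=> k /negbTE; rewrite eq_sym => ->; rewrite mul0r.
congr (_ - _); rewrite [RHS]big_mkcond /= (reindex (@enum_rank (gV X))) /=.
  by apply: eq_bigr => y _; rewrite enum_rankK; case: gadj; rewrite ?mul1r ?mul0r.
by exists enum_val => y _; rewrite ?enum_rankK ?enum_valK.
Qed.

Lemma delta_mx_gvec (X : graph) (x : gV X) :
  delta_mx (enum_rank x) 0 = gvec (delta_fun x).
Proof.
apply/matrixP => i j; rewrite !mxE (ord1 j) eqxx andbT.
by rewrite -(inj_eq enum_val_inj) enum_rankK.
Qed.

Lemma gvec_sum (X : graph) (I : finType) (F : I -> gV X -> C) :
  gvec (fun x => \sum_p F p x) = \sum_p gvec (F p).
Proof.
by apply/matrixP => i j; rewrite summxE !mxE; apply: eq_bigr => p _; rewrite mxE.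
Qed.

Lemma expitL_partial_eigendecomp_cvg (X : graph) (t : R) (x : gV X)
    (I : finType) (lam : I -> R) (W : I -> gV X -> C) :
  lap_eigendecomp lam W (delta_fun x) ->
  forall y, cvgC (fun N => expitL_partial (laplacian C X) t N
                             (enum_rank y) (enum_rank x))
                 (\sum_p cis (t * lam p) * W p y).
Proof.
move=> [eigW sumW] y.
have eig_gvec p : laplacian C X *m gvec (W p) = (lam p)%:C *: gvec (W p).
  by rewrite mul_laplacian_gvec; apply/matrixP => i j; rewrite !mxE eigW.
have delta_sum : delta_mx (enum_rank x) 0 = \sum_p gvec (W p).
  by rewrite delta_mx_gvec -gvec_sum; congr gvec; apply/funext => z; rewrite sumW.
have := expitL_partial_col_cvg t eig_gvec delta_sum (enum_rank y).
by under eq_bigr do rewrite mxE enum_rankK.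
Qed.

Lemma is_expitL_eigendecomp (X : graph) (t : R) :
  (forall x : gV X, exists (I : finType) (lam : I -> R) (W : I -> gV X -> C),
      lap_eigendecomp lam W (delta_fun x)) ->
  exists U, is_expitL (laplacian C X) t U /\
    forall x (I : finType) (lam : I -> R) (W : I -> gV X -> C),
      lap_eigendecomp lam W (delta_fun x) ->
      forall y, U (enum_rank y) (enum_rank x) = \sum_p cis (t * lam p) * W p y.
Proof.
move=> decomp.
pose U := \matrix_(i, j) limC (fun N => expitL_partial (laplacian C X) t N i j).
have UE x I lam W : @lap_eigendecomp X I lam W (delta_fun x) ->
    forall y, U (enum_rank y) (enum_rank x) = \sum_p cis (t * lam p) * W p y.
  move=> dec y; rewrite mxE; apply: cvgC_limC.
  exact: expitL_partial_eigendecomp_cvg.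
exists U; split => // i j.
rewrite -(enum_valK i) -(enum_valK j).
have [I [lam [W dec]]] := decomp (enum_val j).
rewrite (UE _ _ _ _ dec); exact: expitL_partial_eigendecomp_cvg.
Qed.

End GraphFunctions.

Arguments delta_fun {R X} x y.

Section Spectral.
Variable R : realType.
Local Notation C := R[i].
Local Open Scope complex_scope.

Lemma simple_graph_eigendecomp (G : graph) (x : gV G) : simple_graph G ->
  exists (lam : 'I_#|gV G| -> R) (W : 'I_#|gV G| -> gV G -> C),
    lap_eigendecomp lam W (delta_fun x) /\
    forall p, eigenvalue (laplacian C G) (lam p)%:C.
Proof.
move=> [Gsym Girr]; set A := laplacian C G.
have Asym : A \is symmetricmx.
  apply/is_hermitianmxP; rewrite expr0 scale1r; apply/matrixP => i j.
  by rewrite !mxE /= Gsym eq_sym; case: eqP => // ->.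
have Areal : A \is a realmx.
  apply/mxOverP => r s; rewrite mxE; apply: rpredB; last exact: realn.
  by case: eqP => _; [exact: realn | exact: real0].
have Aherm := realsym_hermsym Asym Areal.
set P := spectralmx A; set D := spectral_diag A; set Q := invmx P.
have Punit : P \in unitmx := spectral_unit A.
have AE : A = Q *m diag_mx D *m P.
  exact/orthomx_spectralP/hermitian_normalmx.
have AQ : A *m Q = Q *m diag_mx D by rewrite AE -!mulmxA mulmxV // mulmx1.
have PA : P *m A = diag_mx D *m P by rewrite AE !mulmxA mulmxV // mul1mx.
have /all_sig[lam lamE] : forall r, {l : R | D 0 r = l%:C}.
  move=> r; apply: sig_eqW; apply/complex_realP.
  exact: (mxOverP (hermitian_spectral_diag_real Aherm)).
pose W r z := P r (enum_rank x) * Q (enum_rank z) r.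
exists lam, W; split; first split.
- move=> r z.
  have -> : lap_fun (W r) z = (A *m gvec (W r)) (enum_rank z) 0.
    by rewrite mul_laplacian_gvec mxE enum_rankK.
  rewrite mxE; under eq_bigr do rewrite [gvec _ _ _]mxE /W enum_valK mulrCA.
  rewrite -mulr_sumr.
  have -> : \sum_j A (enum_rank z) j * Q j r = (A *m Q) (enum_rank z) r.
    by rewrite mxE.
  by rewrite AQ mul_mx_diag mxE lamE mulrA mulrC.
- move=> z; have -> : \sum_r P r (enum_rank x) * Q (enum_rank z) r =
                      (Q *m P) (enum_rank z) (enum_rank x).
    by rewrite mxE; apply: eq_bigr => r _; rewrite mulrC.
  by rewrite mulVmx // mxE (inj_eq enum_rank_inj).
- move=> r; apply/eigenvalueP; exists (row r P).
    by rewrite -row_mul PA mul_diag_mx; apply/matrixP => i j; rewrite !mxE lamE.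
  apply/negP => /eqP P_r0.
  have : row r (P *m Q) = 0 by rewrite row_mul P_r0 mul0mx.
  rewrite mulmxV // => /matrixP/(_ 0 r).
  by rewrite !mxE eqxx => /eqP; rewrite oner_eq0.
Qed.

(* Padding with zero eigenfunctions gives all factors of a product the common
   index type 'I_K. *)
Lemma lap_eigendecomp_widen (X : graph) n K (lam : 'I_n -> R)
    (W : 'I_n -> gV X -> C) (f : gV X -> C) :
  (n <= K)%N -> lap_eigendecomp lam W f ->
  lap_eigendecomp (fun p : 'I_K => oapp lam 0 (insub (val p)))
                  (fun p : 'I_K => oapp W (fun _ => 0) (insub (val p))) f.
Proof.
move=> le_nK [eigW sumW]; split=> [p z|z].
  case: insubP => [q _ _|_] /=; first exact: eigW.
  by rewrite /lap_fun big1 // mulr0 subr0 mulr0.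
pose F k := oapp (fun q => W q z) 0 (insub k : option 'I_n).
rewrite -sumW.
have -> : \sum_q W q z = \sum_(q < n) F q by apply: eq_bigr => q _; rewrite /F valK.
rewrite (big_ord_widen K F le_nK) [RHS]big_mkcond; apply: eq_bigr => p _ /=.
by rewrite /F; case: insubP => [q -> _|/negbTE ->].
Qed.

Lemma even_spectrum_eigendecomp (G : graph) (K : nat) (x : gV G) :
  simple_graph G ->
  (forall lambda, eigenvalue (laplacian C G) lambda ->
     exists m : int, lambda = (2 * m)%:~R) ->
  (#|gV G| <= K)%N ->
  exists (lam : 'I_K -> R) (W : 'I_K -> gV G -> C),
    lap_eigendecomp lam W (delta_fun x) /\
    forall p, exists m : int, lam p = (2 * m)%:~R.
Proof.
move=> simpleG even_spec le_GK.
have [lam [W [dec eig_lam]]] := simple_graph_eigendecomp x simpleG.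
eexists; eexists; split; first exact: lap_eigendecomp_widen le_GK dec.
move=> p /=; case: insubP => [q _ _|_] /=; last by exists 0.
have [m lamE] := even_spec _ (eig_lam q); exists m.
by apply: (@complexI R); rewrite lamE rmorph_int.
Qed.

End Spectral.

Lemma degreeE (X : graph) (x : gV X) : degree x = (\sum_(y | gadj x y) 1)%N.
Proof. by rewrite /degree -sum1_card. Qed.

Section CartesianProduct.
Variables (d : nat) (Gs : 'I_d -> graph).
Local Notation V := {dffun forall i : 'I_d, gV (Gs i)}.
Local Notation GP := (cart_prod Gs).
Hypothesis Gs_irr : forall j, irreflexive (@gadj (Gs j)).

Definition set_coord (x : V) (j : 'I_d) (z : gV (Gs j)) : V :=
  [ffun i => @dfwith _ (fun i => gV (Gs i)) (fun i => x i) j z i].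

Lemma set_coord_eq (x : V) j (z : gV (Gs j)) : set_coord x z j = z.
Proof. by rewrite ffunE; apply: dfwith_in. Qed.

Lemma set_coord_neq (x : V) j (z : gV (Gs j)) i :
  i != j -> set_coord x z i = x i.
Proof. by move=> neq_ij; rewrite ffunE; apply: dfwith_out; rewrite eq_sym. Qed.

Lemma cart_prod_nbr_sum (M : nmodType) (h : V -> M) (x : V) :
  \sum_(y | @gadj GP x y) h y = \sum_j \sum_(z | gadj (x j) z) h (set_coord x z).
Proof.
pose P j (y : V) := gadj (x j) (y j) && [forall i, (i != j) ==> (x i == y i)].
have -> : \sum_(y | @gadj GP x y) h y = \sum_y \sum_(j | P j y) h y.
  rewrite big_mkcond; apply: eq_bigr => y _ /=.
  case: existsP => [[j Pjy]|noP]; last first.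
    by rewrite big1 // => j Pjy; case: noP; exists j.
  rewrite (bigD1 j) //= big1 ?addr0 // => i /andP [/andP [adj_xy _] neq_ij].
  move: Pjy => /andP [_ /forallP /(_ i)]; rewrite neq_ij /= => /eqP xyi.
  by move: adj_xy; rewrite xyi Gs_irr.
under eq_bigr do rewrite big_mkcond.
rewrite exchange_big; apply: eq_bigr => j _; rewrite -big_mkcond /=.
rewrite (reindex_onto (@set_coord x j) (fun y => y j)) /=; last first.
  move=> y /andP [_ /forallP agree]; apply/ffunP => i; rewrite ffunE.
  by case: dfwithP => // i' neq; move: (agree i'); rewrite eq_sym neq => /eqP.
apply: eq_bigl => z; rewrite /P set_coord_eq eqxx andbT.
case: (gadj _ _) => //=; apply/forallP => i; apply/implyP => neq_ij.
by rewrite set_coord_neq.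
Qed.

Lemma degree_cart_prod (x : V) : @degree GP x = (\sum_j degree (x j))%N.
Proof.
by rewrite degreeE cart_prod_nbr_sum; apply: eq_bigr => j _; rewrite degreeE.
Qed.

Variable R : realType.
Local Notation C := R[i].
Local Open Scope complex_scope.

Lemma lap_fun_cart_prod (lam : 'I_d -> C) (w : forall j, gV (Gs j) -> C) :
  (forall j z, lap_fun (w j) z = lam j * w j z) ->
  forall y : V, @lap_fun R GP (fun y : V => \prod_j w j (y j)) y =
                (\sum_j lam j) * \prod_j w j (y j).
Proof.
move=> eig_w y; rewrite /lap_fun cart_prod_nbr_sum degree_cart_prod natr_sum.
have nbr_j j : \sum_(z | gadj (y j) z) \prod_i w i (set_coord y z i) =
    ((degree (y j))%:R - lam j) * \prod_i w i (y i).
  have sum_w : \sum_(z | gadj (y j) z) w j z =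
               ((degree (y j))%:R - lam j) * w j (y j).
    by rewrite mulrBl -eig_w /lap_fun opprB addrC subrK.
  rewrite (bigD1 j) //= mulrA -sum_w mulr_suml; apply: eq_bigr => z _.
  rewrite (bigD1 j) //= set_coord_eq; congr (_ * _); apply: eq_bigr => i neq_ij.
  by rewrite set_coord_neq.
rewrite (eq_bigr _ (fun j _ => nbr_j j)) -!mulr_suml -mulrBl sumrB.
by rewrite opprB addrC subrK.
Qed.

Lemma cart_prod_eigendecomp (K : finType) (lam : 'I_d -> K -> R)
    (W : forall j, K -> gV (Gs j) -> C) (x : V) :
  (forall j, lap_eigendecomp (lam j) (W j) (delta_fun (x j))) ->
  @lap_eigendecomp R GP _ (fun f : {ffun 'I_d -> K} => \sum_j lam j (f j))
    (fun f (y : V) => \prod_j W j (f j) (y j)) (@delta_fun R GP x).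
Proof.
move=> dec; split=> [f y|y] /=.
  rewrite (lap_fun_cart_prod (lam := fun j => (lam j (f j))%:C)
    (w := fun j => W j (f j))) ?rmorph_sum //.
  by move=> j z; case: (dec j) => eig _; exact: eig.
rewrite -(bigA_distr_bigA (fun j p => W j p (y j))) /=.
under eq_bigr do rewrite (proj2 (dec _)).
rewrite /delta_fun; case: (eqVneq y x) => [->|/eqP neq_yx].
  by rewrite big1 // => j _; rewrite eqxx.
have [j neq_j] : exists j, y j != x j.
  apply/existsP; apply: contra_notT neq_yx => /existsPn agree.
  by apply/ffunP => j; apply/eqP/negPn.
by rewrite (bigD1 j) //= (negbTE neq_j) mul0r.
Qed.

End CartesianProduct.

Lemma big_option (M : nmodType) (I : finType) (F : option I -> M) :
  \sum_o F o = F None + \sum_i F (Some i).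
Proof.
by rewrite ![index_enum _]unlock [@Finite.enum in LHS]unlock /= big_cons big_map.
Qed.

Section Blowup.
Variable G : graph.
Local Notation X := (blowup2 G).

Lemma blowup2_nbr_sum (M : nmodType) (h : 'I_2 * gV G -> M) (q : 'I_2 * gV G) :
  \sum_(p | @gadj X q p) h p =
  \sum_(z | gadj q.2 z) (h (ord0, z) + h (ord_max, z)).
Proof.
rewrite (eq_bigr (fun p => h (p.1, p.2))) => [|[] //].
rewrite -(pair_big_dep xpredT (fun _ z => gadj q.2 z) (fun l z => h (l, z))) /=.
rewrite big_ord_recl big_ord_recl big_ord0 addr0 -big_split.
by apply: eq_bigr => z _; congr (_ + h (_, z)); apply: val_inj.
Qed.

Lemma degree_blowup2 (q : 'I_2 * gV G) : @degree X q = (2 * degree q.2)%N.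
Proof.
rewrite degreeE blowup2_nbr_sum degreeE big_distrr /=.
by apply: eq_bigr => z _; rewrite muln1.
Qed.

Variable R : realType.
Local Notation C := R[i].
Local Open Scope complex_scope.

Lemma lap_fun_lift (g : gV G -> C) (q : 'I_2 * gV G) :
  @lap_fun R X (fun p => g p.2) q = 2 * lap_fun g q.2.
Proof.
rewrite /lap_fun blowup2_nbr_sum degree_blowup2 natrM mulrBr -mulrA mulr_sumr.
by congr (_ - _); apply: eq_bigr => z _; rewrite mulr2n mulrDl !mul1r.
Qed.

Lemma lap_fun_antilift (g : gV G -> C) (q : 'I_2 * gV G) :
  @lap_fun R X (fun p => (-1) ^+ p.1 * g p.2) q =
  2 * (degree q.2)%:R * ((-1) ^+ q.1 * g q.2).
Proof.
rewrite /lap_fun blowup2_nbr_sum degree_blowup2 natrM big1 ?subr0 // => z _.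
by rewrite expr0 expr1 mul1r mulN1r addrN.
Qed.

Lemma half_sign_ord2 (l m : 'I_2) :
  2^-1 * (-1) ^+ l * (-1) ^+ m + 2^-1 = (m == l)%:R :> C.
Proof.
have half_twice : 2^-1 + 2^-1 = 1 :> C by rewrite [RHS](splitr 1) mul1r.
by case: l m => [[|[|//]] ?] [[|[|//]] ?];
  rewrite /= ?expr0 ?expr1 ?mulr1 ?mulrN1 ?opprK ?half_twice ?addNr.
Qed.

Lemma blowup2_eigendecomp (I : finType) (lam : I -> R) (W : I -> gV G -> C)
    (l : 'I_2) (w : gV G) :
  lap_eigendecomp lam W (delta_fun w) ->
  lap_eigendecomp
    (fun o => if o is Some p then 2 * lam p else 2 * (degree w)%:R)
    (fun o (q : gV X) => if o is Some p then 2^-1 * W p q.2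
       else 2^-1 * (-1) ^+ l * ((-1) ^+ q.1 * delta_fun w q.2))
    (delta_fun ((l, w) : gV X)).
Proof.
move=> [eigW sumW]; split=> [[p|] q /=|[m z]].
- rewrite (lap_funZ _ (fun q : gV X => W p q.2)) lap_fun_lift eigW.
  by rewrite rmorphM /= rmorph_nat; ring.
- rewrite (lap_funZ _ (fun q : gV X => (-1) ^+ q.1 * delta_fun w q.2)).
  rewrite lap_fun_antilift rmorphM /= !rmorph_nat /delta_fun.
  by case: eqP => [->|_]; [ring | rewrite !mulr0].
- rewrite big_option /= -mulr_sumr sumW /delta_fun xpair_eqE.
  case: eqP => _; last by rewrite andbF !mulr0 addr0.
  by rewrite andbT !mulr1 half_sign_ord2.
Qed.

End Blowup.

Lemma blowup2_lap_PST (R : realType) (G : graph) (w : gV G) (tau : R) :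
  (forall x : gV G,
     exists (I : finType) (lam : I -> R) (W : I -> gV G -> R[i]),
       lap_eigendecomp lam W (delta_fun x) /\
       forall p, cis (tau * (2 * lam p)) = 1) ->
  cis (tau * (2 * (degree w)%:R)) = -1 ->
  lap_PST (X := blowup2 G) (ord0, w) (ord_max, w) tau.
Proof.
move=> decG cis_deg.
have decX (q : gV (blowup2 G)) : exists (I : finType) (lam : I -> R)
    (W : I -> gV (blowup2 G) -> R[i]), lap_eigendecomp lam W (delta_fun q).
  case: q => l x; have [I [lam [W [dec _]]]] := decG x.
  by exists (option I); do 2 eexists; exact: (blowup2_eigendecomp l dec).
have [U [expU UE]] := is_expitL_eigendecomp tau decX.
exists U; split => //; exists 1 => c; rewrite mul1r -(enum_valK c).
have [I [lam [W [dec cis_lam]]]] := decG w.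
rewrite (UE _ _ _ _ (blowup2_eigendecomp ord0 dec)) big_option /= cis_deg.
under eq_bigr do rewrite cis_lam mul1r.
(* The phases 1 and -1 turn the decomposition of e_(0,w) into that of e_(1,w). *)
have [_ sum_max] := blowup2_eigendecomp ord_max dec.
rewrite (inj_eq enum_rank_inj) -[(_ == _)%:R](sum_max (enum_val c)).
by rewrite big_option /= expr0 expr1; congr (_ + _); ring.
Qed.

Lemma cart_prod_even_eigendecomp (R : realType) (d : nat) (Gs : 'I_d -> graph) :
  (forall j, simple_graph (Gs j)) ->
  (forall j (lambda : R[i]), eigenvalue (laplacian R[i] (Gs j)) lambda ->
      exists m : int, lambda = (2 * m)%:~R) ->
  forall x : gV (cart_prod Gs),
  exists (I : finType) (lam : I -> R) (W : I -> gV (cart_prod Gs) -> R[i]),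
    lap_eigendecomp lam W (delta_fun x) /\
    forall p, exists m : int, lam p = (2 * m)%:~R.
Proof.
move=> simple even_spec x; pose K := \max_j #|gV (Gs j)|.
have factor j : exists lamW : ('I_K -> R) * ('I_K -> gV (Gs j) -> R[i]),
    lap_eigendecomp lamW.1 lamW.2 (delta_fun (x j)) /\
    forall p, exists m : int, lamW.1 p = (2 * m)%:~R.
  have [lam [W decj]] := even_spectrum_eigendecomp (x j) (simple j) (even_spec j)
                           (leq_bigmax (F := fun i => #|gV (Gs i)|) j).
  by exists (lam, W).
have /all_sig[lamW dec] := fun j => cid (factor j).
exists {ffun 'I_d -> 'I_K}, (fun f : {ffun 'I_d -> 'I_K} => \sum_j (lamW j).1 (f j)).
exists (fun (f : {ffun 'I_d -> 'I_K}) (y : gV (cart_prod Gs)) =>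
          \prod_j (lamW j).2 (f j) (y j)).
split.
  exact: (cart_prod_eigendecomp (fun j => (simple j).2) (fun j => (dec j).1)).
move=> f; apply: (big_ind (fun r => exists m : int, r = (2 * m)%:~R)).
- by exists 0; rewrite mulr0.
- by move=> _ _ [a ->] [b ->]; exists (a + b); rewrite mulrDr intrD.
- by move=> j _; case: (dec j) => _; apply.
Qed.

Theorem theorem5 (R : realType) (d : nat) (Gs : 'I_d -> graph) (k : 'I_d -> nat) :
  (forall j, simple_graph (Gs j)) ->
  (forall j, connected_graph (Gs j)) ->
  (forall j, regular_graph (Gs j) (k j)) ->
  odd (\sum_(j < d) k j)%N ->
  (forall j (lambda : R[i]), eigenvalue (laplacian R[i] (Gs j)) lambda ->
      exists m : int, lambda = (2 * m)%:~R) ->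
  forall u : gV (cart_prod Gs),
    lap_PST (R := R) (X := blowup2 (cart_prod Gs)) (ord0, u) (ord_max, u) (pi / 2).
Proof.
move=> simple _ regular odd_k even_spec u.
have pihalf_twice (r : R) : pi / 2 * (2 * r) = pi * r by rewrite mulrA divfK.
apply: blowup2_lap_PST => [x|].
  have [I [lam [W [dec even_lam]]]] :=
    cart_prod_even_eigendecomp simple even_spec x.
  exists I, lam, W; split => // p; have [m ->] := even_lam p.
  by rewrite pihalf_twice cis_pimul2z.
have deg_u : degree u = (\sum_j k j)%N.
  rewrite (degree_cart_prod (fun j => (simple j).2)).
  by apply: eq_bigr => j _; exact: regular.
by rewrite pihalf_twice deg_u mulr_natr cis_pimulrn -signr_odd odd_k expr1.
Qed.
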